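(* Let $Q>0$ and $\Gamma>0$. Let $f$ be a nonnegative random variable with a continuous probability density function, and let $I$ be a nonnegative random variable independent of $f$ with $\mathbb{E}[I]=\Gamma$. Let $\mu_a>0$ satisfy $\mathbb{E}\left[\left(\frac{1}{\mu_a}-\frac{1+I}{f}\right)^+\right]=Q$, and let $\mu_p>0$ satisfy $\mathbb{E}\left[\left(\frac{1}{\mu_p}-\frac{1+\Gamma}{f}\right)^+\right]=Q$. Define $$C^{{\rm ER},a}_{\rm PR,WF}=\mathbb{E}\left[\left(\log\frac{f}{\mu_a(1+I)}\right)^+\right],\qquad C^{{\rm ER},p}_{\rm PR,WF}=\mathbb{E}\left[\left(\log\frac{f}{\mu_p(1+\Gamma)}\right)^+\right].$$ Then $C^{{\rm ER},a}_{\rm PR,WF}\geq C^{{\rm ER},p}_{\rm PR,WF}$.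
   Context: $(a)^+=\max(0,a)$. Setting: a primary radio (PR) fading link with channel power gain $f$ and unit noise power. $I$ is the interference power from a cognitive radio at the PR receiver, independent of $f$. The average-interference-power (AIP) case has random $I$ with $\mathbb{E}[I]=\Gamma$. The peak-interference-power (PIP) case has interference equal to $\Gamma$ always. The PR uses water-filling power control $q=(1/\mu-(1+I)/f)^+$ (respectively $(1/\mu-(1+\Gamma)/f)^+$), subject to average transmit power $Q$. Thus $C^{{\rm ER},a}_{\rm PR,WF}$ and $C^{{\rm ER},p}_{\rm PR,WF}$ are the PR ergodic capacities $\max_{q\ge0,\,\mathbb{E}[q]\le Q}\mathbb{E}[\log(1+fq/(1+I))]$ (respectively with $I$ replaced by $\Gamma$), attained by water-filling. *)

From HB Require Import structures.
From mathcomp Require Import all_boot all_order all_algebra.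
From mathcomp Require Import all_classical all_reals all_analysis.
Set Implicit Arguments. Unset Strict Implicit. Unset Printing Implicit Defensive.
Import Order.TTheory GRing.Theory Num.Theory.
Import numFieldNormedType.Exports.
Local Open Scope classical_set_scope.
Local Open Scope ring_scope.

Definition pos_part {R : realType} (a : R) : R := Num.max 0 a.

Definition indep_RV {d} {T : measurableType d} {R : realType}
  (P : probability T R) (X Y : T -> R) : Prop :=
  forall A B : set R, measurable A -> measurable B ->
    P (X @^-1` A `&` Y @^-1` B) = (P (X @^-1` A) * P (Y @^-1` B))%E.

Definition is_pdf {d} {T : measurableType d} {R : realType}
  (P : probability T R) (X : T -> R) (p : R -> R) : Prop :=
  (forall x, 0 <= p x) /\
  forall A : set R, measurable A ->
    P (X @^-1` A) = (\int[lebesgue_measure]_(x in A) (p x)%:E)%E.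

From HB Require Import structures.
From mathcomp Require Import all_boot all_order all_algebra.
From mathcomp Require Import all_classical all_reals all_analysis.
From mathcomp Require Import measurable_realfun.
From mathcomp Require Import ring lra.
Import Order.TTheory GRing.Theory Num.Theory.
Import numFieldNormedType.Exports.
Local Open Scope classical_set_scope.
Local Open Scope ring_scope.

(* Let s(x) = (x/mu_p - (1+Gamma))^+ be the received signal power of the
   PIP water-filling policy q_p.  Since y |-> ln(1 + s/(1+y)) is convex and
   I is independent of f with mean Gamma, Jensen's inequality shows that
   q_p still achieves at least C_p when the interference is the random I:
   C_p <= E[ln(1 + f q_p(f)/(1+I))].  On the other hand, for every (f, I)
   water-filling maximises the Lagrangian  rate - mu_a * power, and both
   policies have average power Q, so E[ln(1 + f q_p(f)/(1+I))] <= C_a.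
   The density of f only serves to make f > 0 almost surely. *)

Section pos_part.
Context {R : realType}.
Implicit Types a x : R.

Lemma pos_part_ge0 a : 0 <= pos_part a.
Proof. by rewrite /pos_part le_max lexx. Qed.

Lemma pos_part_id a : 0 <= a -> pos_part a = a.
Proof. by move=> a0; rewrite /pos_part max_r. Qed.

Lemma pos_partZ x a : 0 <= x -> pos_part (x * a) = x * pos_part a.
Proof.
move=> x0; rewrite /pos_part; have [a0|a0] := leP 0 a.
- by rewrite !max_r // mulr_ge0.
- by rewrite !max_l ?mulr0 // ?mulr_ge0_le0 // ltW.
Qed.

Lemma measurable_pos_part : measurable_fun [set: R] (@pos_part R).
Proof. by apply: measurable_maxr => //; exact: measurable_cst. Qed.

End pos_part.

Lemma measurable_inv (R : realType) : measurable_fun [set: R] (fun x : R => x^-1).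
Proof.
have -> : (fun x : R => x^-1) = (fun x => if x == 0 then 0 else x^-1).
  by apply: funext => x; case: eqP => // ->; rewrite invr0.
apply: measurable_fun_if => //.
  exact: (@measurable_fun_eqr _ _ _ _ id (cst 0)).
rewrite setTI.
have -> : (fun x : R => x == 0) @^-1` [set false] = [set x | x != 0].
  by apply/seteqP; split => x /=; case: eqP.
apply: open_continuous_measurable_fun; first exact: open_neq.
by move=> x; rewrite inE => /inv_continuous.
Qed.

Ltac solve_measurable := repeat first [ assumption | exact: measurable_cst
  | exact: measurable_id
  | apply: measurable_funB | apply: measurable_funD | apply: measurable_funM
  | apply: (measurableT_comp measurable_pos_part)
  | apply: (measurableT_comp (@measurable_ln _))
  | apply: (measurableT_comp (measurable_inv _)) ].

Section log_inequalities.
Context {R : realType}.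

Lemma ln_sub_ge (a b : R) : 0 < a -> 0 < b -> 1 - b / a <= ln a - ln b.
Proof.
move=> a0 b0; have := @le_ln1Dx R (b / a - 1).
rewrite addrCA subrr addr0 ln_div ?posrE //.
by have := divr_gt0 b0 a0; lra.
Qed.

Lemma pos_part_ln_div (x b : R) : 0 <= x -> 0 < b ->
  pos_part (ln (x / b)) = ln (1 + pos_part (x - b) / b).
Proof.
move=> x0 b0; rewrite /pos_part.
have [bx|xb] := leP b x.
- have e : 1 + (x - b) / b = x / b by field; rewrite lt0r_neq0.
  rewrite [Num.max 0 (x - b)]max_r ?subr_ge0 // e max_r //.
  by apply: ln_ge0; rewrite ler_pdivlMr // mul1r.
- rewrite [Num.max 0 (x - b)]max_l ?subr_le0 ?ltW // mul0r addr0 ln1 max_l //.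
  by apply: ln_le0; rewrite ler_pdivrMr // mul1r ltW.
Qed.

(* The slope is minus the derivative of y |-> ln (1 + c / (1 + y)) at G;
   convexity keeps the graph above this tangent line. *)
Lemma ln1Ddiv_ge_tangent (c y G : R) : 0 <= c -> 0 <= y -> 0 <= G ->
  ln (1 + c / (1 + G)) + c / ((1 + G) * (1 + G + c)) * G <=
  ln (1 + c / (1 + y)) + c / ((1 + G) * (1 + G + c)) * y.
Proof.
move=> c0 y0 G0.
have u0 : 0 < 1 + y by lra.
have v0 : 0 < 1 + G by lra.
have a0 : 0 < 1 + c / (1 + y) by have := divr_ge0 c0 (ltW u0); lra.
have b0 : 0 < 1 + c / (1 + G) by have := divr_ge0 c0 (ltW v0); lra.
have := ln_sub_ge _ _ a0 b0.
suff : c / ((1 + G) * (1 + G + c)) * (G - y) <=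
  1 - (1 + c / (1 + G)) / (1 + c / (1 + y)) by lra.
have -> : 1 - (1 + c / (1 + G)) / (1 + c / (1 + y)) =
   c / ((1 + G) * (1 + G + c)) * (G - y) +
   c * (G - y) ^+ 2 / ((1 + G) * (1 + y + c) * (1 + G + c)).
  field; rewrite !lt0r_neq0 //; lra.
rewrite lerDl; apply: divr_ge0; first by rewrite mulr_ge0 ?sqr_ge0.
by rewrite !mulr_ge0 //; lra.
Qed.

(* Water-filling maximises rate - mu * power for the channel gain x/(1+y). *)
Lemma waterfill_lagrangian_le (x y q mu : R) :
  0 < x -> 0 <= y -> 0 <= q -> 0 < mu ->
  ln (1 + x * q / (1 + y)) + mu * pos_part (mu^-1 - (1 + y) / x) <=
  pos_part (ln (x / (mu * (1 + y)))) + mu * q.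
Proof.
move=> x0 y0 q0 mu0.
have u0 : 0 < 1 + y by lra.
set z := x / (mu * (1 + y)).
have z0 : 0 < z by apply: divr_gt0 => //; apply: mulr_gt0.
have ePow : mu * (mu^-1 - (1 + y) / x) = 1 - z^-1.
  by rewrite /z; field; rewrite !lt0r_neq0.
have eRate : x * q / (1 + y) = z * (mu * q).
  by rewrite /z; field; rewrite !lt0r_neq0.
have muq0 : 0 <= mu * q by rewrite mulr_ge0 // ltW.
rewrite eRate /pos_part.
have [z1|z1] := leP 1 z.
- have w0 : 0 <= mu^-1 - (1 + y) / x.
    by rewrite -(pmulr_rge0 _ mu0) ePow subr_ge0 invf_le1.
  rewrite (max_r w0) (max_r (ln_ge0 z1)) ePow.
  have := @ln_sub_ge z (1 + z * (mu * q)) z0 (ltr_pwDl ltr01 (mulr_ge0 (ltW z0) muq0)).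
  have -> : (1 + z * (mu * q)) / z = z^-1 + mu * q.
    by field; rewrite lt0r_neq0.
  lra.
- have w0 : mu^-1 - (1 + y) / x <= 0.
    by rewrite -(pmulr_rle0 _ mu0) ePow subr_le0 invf_ge1 // ltW.
  rewrite (max_l w0) (max_l (ln_le0 (ltW z1))) mulr0 addr0 add0r.
  apply: le_trans (le_ln1Dx _) _; first by have := mulr_ge0 (ltW z0) muq0; lra.
  by rewrite ler_piMl // ltW.
Qed.

End log_inequalities.

Section integrals.
Local Open Scope ereal_scope.
Context d (T : measurableType d) (R : realType).

Lemma ge0_integralDZ (mu : {measure set T -> \bar R}) (g h : T -> R) (c : R) :
  measurable_fun setT g -> measurable_fun setT h ->
  (forall t, (0 <= g t)%R) -> (forall t, (0 <= h t)%R) -> (0 <= c)%R ->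
  \int[mu]_t ((g t)%:E + c%:E * (h t)%:E) =
  \int[mu]_t (g t)%:E + c%:E * \int[mu]_t (h t)%:E.
Proof.
move=> mg mh g0 h0 c0.
have mgE : measurable_fun setT (EFin \o g) by exact/measurable_EFinP.
have mhE : measurable_fun setT (EFin \o h) by exact/measurable_EFinP.
have g0E t : setT t -> 0 <= (g t)%:E by rewrite lee_fin.
have h0E t : setT t -> 0 <= (h t)%:E by rewrite lee_fin.
have ch0E t : setT t -> 0 <= c%:E * (h t)%:E by rewrite -EFinM lee_fin mulr_ge0.
have mchE : measurable_fun setT (fun t => c%:E * (h t)%:E) by exact: measurable_funeM.
by rewrite ge0_integralD // ge0_integralZl.
Qed.

Lemma le_integral_supporting_line (P : probability T R) (Y : T -> R)
    (h : R -> R) (a s G : R) :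
  measurable_fun setT Y -> measurable_fun setT h ->
  (forall t, (0 <= Y t)%R) -> (forall y, (0 <= y)%R -> (0 <= h y)%R) ->
  (0 <= a)%R -> (0 <= s)%R -> (0 <= G)%R -> \int[P]_t (Y t)%:E = G%:E ->
  (forall y, (0 <= y)%R -> a + s * G <= h y + s * y)%R ->
  a%:E <= \int[P]_t (h (Y t))%:E.
Proof.
move=> mY mh Y0 h0 a0 s0 G0 EY line.
have mhY : measurable_fun setT (h \o Y) by exact: measurableT_comp.
have hY0 t : (0 <= h (Y t))%R by exact: h0.
suff : (a + s * G)%:E <= \int[P]_t (h (Y t))%:E + s%:E * \int[P]_t (Y t)%:E.
  by rewrite EY EFinD -EFinM leeD2rE.
have -> : (a + s * G)%:E = \int[P]_t (a + s * G)%:E.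
  by rewrite integral_cst //= probability_setT mule1.
rewrite -ge0_integralDZ //; apply: ge0_le_integral => //.
- by move=> t _; rewrite lee_fin addr_ge0 // mulr_ge0.
- apply: emeasurable_funD; first exact/measurable_EFinP.
  by apply: measurable_funeM; exact/measurable_EFinP.
- by move=> t _; rewrite -EFinM -EFinD lee_fin line.
Qed.

Lemma pdf_ae_neq (P : probability T R) (X : T -> R) (p : R -> R) (x0 : R) :
  measurable_fun setT X -> is_pdf P X p -> {ae P, forall t, X t != x0}.
Proof.
move=> mX [_ pdfX]; exists (X @^-1` [set x0]); split.
- by rewrite -[X in measurable X]setTI; apply: mX => //; exact: measurable_set1.
- by rewrite pdfX ?integral_set1 //; exact: measurable_set1.
- by move=> t /= /negP; rewrite negbK => /eqP.
Qed.

Lemma measurable_fun_integral_section (P : probability T R) (Y : T -> R)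
    (H : R * R -> \bar R) :
  measurable_fun setT Y -> measurable_fun [set: (R * R)%type] H ->
  (forall z, 0 <= H z) -> measurable_fun setT (fun x => \int[P]_t H (x, Y t)).
Proof.
move=> mY mH H0.
pose Ym : {mfun T >-> R} := HB.pack Y (isMeasurableFun.Build _ _ _ _ _ mY).
have -> : (fun x => \int[P]_t H (x, Y t)) = fubini_F (distribution P Ym) H.
  apply/funext => x; rewrite /fubini_F ge0_integral_distribution //.
  exact: measurable_fun_pair2.
exact: measurable_fun_fubini_tonelli_F.
Qed.

Lemma indep_integral_pair (P : probability T R) (X Y : T -> R)
    (H : R * R -> \bar R) :
  measurable_fun setT X -> measurable_fun setT Y ->
  measurable_fun [set: (R * R)%type] H -> (forall z, 0 <= H z) ->
  indep_RV P X Y ->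
  \int[P]_t H (X t, Y t) = \int[P]_s \int[P]_t H (X s, Y t).
Proof.
move=> mX mY mH H0 XY.
pose Xm : {mfun T >-> R} := HB.pack X (isMeasurableFun.Build _ _ _ _ _ mX).
pose Ym : {mfun T >-> R} := HB.pack Y (isMeasurableFun.Build _ _ _ _ _ mY).
have mXY : measurable_fun setT (fun t => (X t, Y t)) by exact: measurable_fun_pair.
pose XYm : {mfun T >-> (R * R)%type} :=
  HB.pack (fun t => (X t, Y t)) (isMeasurableFun.Build _ _ _ _ _ mXY).
have mHx x : measurable_fun setT (fun y => H (x, y)) by exact: measurable_fun_pair2.
have -> : \int[P]_t H (X t, Y t) = \int[distribution P XYm]_z H z.
  by rewrite ge0_integral_distribution.
have -> : \int[distribution P XYm]_z H z =
    \int[distribution P Xm \x distribution P Ym]_z H z.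
  apply: eq_measure_integral => A mA _.
  by apply/esym; apply: product_measure_unique.
rewrite fubini_tonelli1 //.
transitivity (\int[P]_s fubini_F (distribution P Ym) H (X s)).
  apply: ge0_integral_distribution; first exact: measurable_fun_fubini_tonelli_F.
  by move=> x; exact: integral_ge0.
apply: eq_integral => s _.
exact: ge0_integral_distribution.
Qed.
End integrals.

Section capacities.
Context {d : measure_display} {T : measurableType d} {R : realType}.
Context {P : probability T R} {f I : T -> R} {Gamma mu_p : R}.
Hypotheses (mf : measurable_fun setT f) (mI : measurable_fun setT I).
Hypotheses (f0 : forall t, 0 <= f t) (I0 : forall t, 0 <= I t).
Hypotheses (Gamma0 : 0 <= Gamma) (mu_p0 : 0 < mu_p).

(* The received power x * q_p(x) of the PIP water-filling policy q_p; this
   form is also meaningful at x = 0. *)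
Definition pip_signal (x : R) := pos_part (mu_p^-1 * x - (1 + Gamma)).

(* The positive part keeps the rate nonnegative on all of R * R, as Tonelli
   requires. *)
Definition pip_rate (z : R * R) := ln (1 + pip_signal z.1 / (1 + pos_part z.2)).

Lemma pip_rate_ge0 z : 0 <= pip_rate z.
Proof.
apply: ln_ge0; rewrite lerDl divr_ge0 ?pos_part_ge0 //.
by rewrite addr_ge0 ?pos_part_ge0.
Qed.

Lemma measurable_pip_signal : measurable_fun setT pip_signal.
Proof. by rewrite /pip_signal; solve_measurable. Qed.

Lemma measurable_pip_rate : measurable_fun setT pip_rate.
Proof.
apply: (measurableT_comp (@measurable_ln _)); apply: measurable_funD => //.
apply: measurable_funM; first exact: measurableT_comp measurable_pip_signal _.
apply: (measurableT_comp (measurable_inv _)); apply: measurable_funD => //.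
exact: measurableT_comp measurable_pos_part _.
Qed.

Lemma pip_capacity_le_pip_rate :
  indep_RV P f I -> (\int[P]_t (I t)%:E = Gamma%:E)%E ->
  (\int[P]_t (pos_part (ln (f t / (mu_p * (1 + Gamma)))))%:E
     <= \int[P]_t (pip_rate (f t, I t))%:E)%E.
Proof.
move=> fI EI.
have G1 : 0 < 1 + Gamma by apply: lt_le_trans ltr01 _; rewrite lerDl.
pose cap x := ln (1 + pip_signal x / (1 + Gamma)).
have cap0 x : 0 <= cap x.
  by apply: ln_ge0; rewrite lerDl divr_ge0 ?pos_part_ge0 // ltW.
have mrate : measurable_fun setT (fun z => (pip_rate z)%:E).
  by apply/measurable_EFinP; exact: measurable_pip_rate.
have Cp : (\int[P]_t (pos_part (ln (f t / (mu_p * (1 + Gamma)))))%:E =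
    \int[P]_s (cap (f s))%:E)%E.
  apply: eq_integral => s _; rewrite /cap /pip_signal -pos_part_ln_div //.
  - by rewrite invfM mulrA [f s * _]mulrC.
  - by rewrite mulr_ge0 // invr_ge0 ltW.
have rate0 z : (0 <= (pip_rate z)%:E)%E by rewrite lee_fin pip_rate_ge0.
have msection :
    measurable_fun setT (fun x => (\int[P]_t (pip_rate (x, I t))%:E)%E).
  exact: (@measurable_fun_integral_section _ _ _ P I (fun z => (pip_rate z)%:E)).
rewrite Cp (@indep_integral_pair _ _ _ P f I (fun z => (pip_rate z)%:E)) //.
apply: ge0_le_integral => //.
- by move=> s _; rewrite lee_fin.
- apply/measurable_EFinP; apply: (measurableT_comp (f := cap) _ mf).
  apply: (measurableT_comp (@measurable_ln _)); apply: measurable_funD => //.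
  by apply: measurable_funM => //; exact: measurable_pip_signal.
- exact: measurableT_comp msection mf.
move=> s _; set c := pip_signal (f s).
pose slope := c / ((1 + Gamma) * (1 + Gamma + c)).
apply: (@le_integral_supporting_line _ _ _ P I (fun y => pip_rate (f s, y))
  (cap (f s)) slope Gamma) => //.
- exact: measurable_fun_pair2 measurable_pip_rate.
- by move=> y _; exact: pip_rate_ge0.
- by rewrite divr_ge0 ?pos_part_ge0 // mulr_ge0 ?addr_ge0 ?pos_part_ge0 // ltW.
- move=> y y0; rewrite /pip_rate /cap /= pos_part_id //.
  exact: ln1Ddiv_ge_tangent (pos_part_ge0 _) y0 Gamma0.
Qed.

Lemma pip_rate_le_aip_capacity {p : R -> R} {mu_a Q : R} :
  is_pdf P f p -> 0 < mu_a ->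
  (\int[P]_t (pos_part (mu_a^-1 - (1 + I t) / f t))%:E = Q%:E)%E ->
  (\int[P]_t (pos_part (mu_p^-1 - (1 + Gamma) / f t))%:E = Q%:E)%E ->
  (\int[P]_t (pip_rate (f t, I t))%:E
     <= \int[P]_t (pos_part (ln (f t / (mu_a * (1 + I t)))))%:E)%E.
Proof.
move=> pdf mu_a0 Ea Ep.
pose qa t := pos_part (mu_a^-1 - (1 + I t) / f t).
pose qp t := pos_part (mu_p^-1 - (1 + Gamma) / f t).
pose Ca t := pos_part (ln (f t / (mu_a * (1 + I t)))).
have mqa : measurable_fun setT qa by rewrite /qa; solve_measurable.
have mqp : measurable_fun setT qp by rewrite /qp; solve_measurable.
have mCa : measurable_fun setT Ca by rewrite /Ca; solve_measurable.
have mrate : measurable_fun setT (fun t => pip_rate (f t, I t)).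
  exact: measurableT_comp measurable_pip_rate (measurable_fun_pair mf mI).
have qa0 t : 0 <= qa t by exact: pos_part_ge0.
have qp0 t : 0 <= qp t by exact: pos_part_ge0.
have Ca0 t : 0 <= Ca t by exact: pos_part_ge0.
have rate0 t : 0 <= pip_rate (f t, I t) by exact: pip_rate_ge0.
have mu_aQ : (mu_a * Q)%:E \is a fin_num by [].
rewrite -(leeD2rE _ _ mu_aQ) EFinM -{1}Ea -Ep -!ge0_integralDZ ?(ltW mu_a0) //.
have mu_aq0 q : 0 <= q -> (0 <= mu_a%:E * q%:E)%E.
  by move=> q0; rewrite -EFinM lee_fin mulr_ge0 // ltW.
apply: ae_ge0_le_integral => //.
- by move=> t _; rewrite adde_ge0 ?mu_aq0 ?lee_fin ?pip_rate_ge0 ?pos_part_ge0.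
- by apply: emeasurable_funD; [exact/measurable_EFinP | exact/measurable_funeM/measurable_EFinP].
- by move=> t _; rewrite adde_ge0 ?mu_aq0 ?lee_fin ?pip_rate_ge0 ?pos_part_ge0.
- by apply: emeasurable_funD; [exact/measurable_EFinP | exact/measurable_funeM/measurable_EFinP].
apply: filterS (@pdf_ae_neq _ _ _ P f p 0 mf pdf) => t ft0 _.
have ft : 0 < f t by rewrite lt_neqAle eq_sym ft0 f0.
have signal : pip_signal (f t) = f t * qp t.
  rewrite -pos_partZ ?ltW // mulrBr [f t * mu_p^-1]mulrC.
  by rewrite [f t * (_ / _)]mulrC divfK // lt0r_neq0.
rewrite -!EFinM -!EFinD lee_fin /pip_rate /= signal pos_part_id //.
exact: waterfill_lagrangian_le (pos_part_ge0 _) mu_a0.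
Qed.
End capacities.

Theorem theorem4p2 (d : measure_display) (T : measurableType d) (R : realType)
  (P : probability T R) (f I : T -> R) (Q Gamma mu_a mu_p : R) :
  0 < Q -> 0 < Gamma ->
  measurable_fun setT f -> measurable_fun setT I ->
  (forall t, 0 <= f t) -> (forall t, 0 <= I t) ->
  (exists p : R -> R, is_pdf P f p /\ {within `[0, +oo[, continuous p}) ->
  indep_RV P f I ->
  (\int[P]_t (I t)%:E = Gamma%:E)%E ->
  0 < mu_a ->
  (\int[P]_t (pos_part (mu_a^-1 - (1 + I t) / f t))%:E = Q%:E)%E ->
  0 < mu_p ->
  (\int[P]_t (pos_part (mu_p^-1 - (1 + Gamma) / f t))%:E = Q%:E)%E ->
  (\int[P]_t (pos_part (ln (f t / (mu_p * (1 + Gamma)))))%:E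
     <= \int[P]_t (pos_part (ln (f t / (mu_a * (1 + I t)))))%:E)%E.
Proof.
move=> _ Gamma0 mf mI f0 I0 [p [pdf _]] fI EI mu_a0 Ea mu_p0 Ep.
exact: le_trans (pip_capacity_le_pip_rate mf mI f0 I0 (ltW Gamma0) mu_p0 fI EI)
  (pip_rate_le_aip_capacity mf mI f0 I0 pdf mu_a0 Ea Ep).
Qed.
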